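(* Let $J$ be a finite poset on $\{1,\dots,n\}$, $p\in\{1,\dots,n\}$, and let $J_p\subseteq J$ be an inward or outward $p$-anchored path of $J$. Then $J$ and $\delta_{J_p}J$ are strongly Gram $\mathbb Z$-congruent, i.e. there is $B\in GL(n,\mathbb Z)$ with $C_J=B^{tr}C_{\delta_{J_p}J}B$. In particular, $J$ is non-negative of corank $r\ge0$ if and only if $\delta_{J_p}J$ is non-negative of corank $r$.
   Context: For a finite poset $I$ on $\{1,\dots,n\}$: $C_I=[c_{ij}]$ with $c_{ij}=1$ iff $i\preceq_I j$ (else $0$); $G_I=\tfrac12(C_I+C_I^{tr})$; $I$ is non-negative of corank $r$ if $G_I$ is positive semi-definite of rank $n-r$. $\mathcal H(I)$ is the Hasse digraph (arrow $i\to j$ iff $i\prec_I j$ with no element strictly between). $GL(n,\mathbb Z)$ is the set of integer matrices with determinant $\pm1$. A subset $J_p\subseteq J$ with $p\in J_p$ is a $p$-anchored path if: the digraph $\mathcal H(J)$ with vertex $p$ deleted is disconnected, $J_p\setminus\{p\}$ is the vertex set of one of its connected components (so the vertices of $J_p\setminus\{p\}$ are adjacent in $\mathcal H(J)$ only to vertices of $J_p$), the subdigraph of $\mathcal H(J)$ induced on $J_p$ has a path as underlying graph, and $p$ has degree $1$ in it. It is inward (resp. outward) if $p$ is the unique maximal (resp. minimal) element of $J_p$ with the induced order. For such $J_p$, $\delta_{J_p}J$ is the poset on $\{1,\dots,n\}$ whose Hasse digraph is obtained from $\mathcal H(J)$ by reversing all arrows between vertices of $J_p$. *)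

From HB Require Import structures.
From mathcomp Require Import all_boot all_order all_algebra.
Set Implicit Arguments. Unset Strict Implicit. Unset Printing Implicit Defensive.
Import Order.TTheory GRing.Theory Num.Theory.
Local Open Scope ring_scope.

(* A finite poset on {1,...,n} is represented on 'I_n by its (boolean)
   relation  le i j  <->  i <=_I j. *)
Definition is_poset (n : nat) (le : rel 'I_n) : Prop :=
  [/\ reflexive le, antisymmetric le & transitive le].

Definition Cmx (R : nzRingType) (n : nat) (le : rel 'I_n) : 'M[R]_n :=
  \matrix_(i, j) (le i j)%:R.

Definition Gmx (R : realFieldType) (n : nat) (le : rel 'I_n) : 'M[R]_n :=
  2^-1 *: (Cmx R le + (Cmx R le)^T).

Definition psd (R : realFieldType) (n : nat) (G : 'M[R]_n) : Prop :=
  forall v : 'cV[R]_n, 0 <= (v^T *m G *m v) 0 0.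

Definition nonneg_corank (R : realFieldType) (n : nat) (le : rel 'I_n)
    (r : nat) : Prop :=
  psd (Gmx R le) /\ (\rank (Gmx R le) + r)%N = n.

Definition hasse (n : nat) (le : rel 'I_n) : rel 'I_n :=
  fun i j => [&& i != j, le i j &
     [forall k, ~~ [&& k != i, k != j, le i k & le k j]]].

Definition hadj (n : nat) (le : rel 'I_n) : rel 'I_n :=
  fun i j => hasse le i j || hasse le j i.

Definition hadj_del (n : nat) (le : rel 'I_n) (p : 'I_n) : rel 'I_n :=
  fun i j => [&& hadj le i j, i != p & j != p].

Definition consec (T : eqType) (s : seq T) (x y : T) : bool :=
  ((x, y) \in zip s (behead s)) || ((y, x) \in zip s (behead s)).

Definition anchored_path (n : nat) (le : rel 'I_n) (p : 'I_n)
    (Jp : {set 'I_n}) : Prop :=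
  [/\ p \in Jp,
      (exists x y, [/\ x != p, y != p & ~~ connect (hadj_del le p) x y]),
      (exists2 x, x \in Jp :\ p &
         Jp :\ p = [set y | (y != p) && connect (hadj_del le p) x y]),
      (* the induced subdigraph on Jp has a path as underlying graph *)
      (exists s : seq 'I_n, [/\ uniq s, (forall x, (x \in s) = (x \in Jp)) &
         forall x y, x \in Jp -> y \in Jp -> hadj le x y = consec s x y]) &
      #|[set y in Jp | hadj le p y]| = 1%N].

Definition maximal_in (n : nat) (le : rel 'I_n) (A : {set 'I_n}) (x : 'I_n) :=
  x \in A /\ forall y, y \in A -> le x y -> y = x.
Definition minimal_in (n : nat) (le : rel 'I_n) (A : {set 'I_n}) (x : 'I_n) :=
  x \in A /\ forall y, y \in A -> le y x -> y = x.

Definition inward_anchored_path (n : nat) (le : rel 'I_n) (p : 'I_n)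
    (Jp : {set 'I_n}) : Prop :=
  anchored_path le p Jp /\ maximal_in le Jp p /\
  forall x, maximal_in le Jp x -> x = p.

Definition outward_anchored_path (n : nat) (le : rel 'I_n) (p : 'I_n)
    (Jp : {set 'I_n}) : Prop :=
  anchored_path le p Jp /\ minimal_in le Jp p /\
  forall x, minimal_in le Jp x -> x = p.

Definition hasse_flip (n : nat) (le : rel 'I_n) (Jp : {set 'I_n}) : rel 'I_n :=
  fun i j => if (i \in Jp) && (j \in Jp) then hasse le j i else hasse le i j.

(* delta_{Jp} J : the poset whose Hasse digraph is hasse_flip, i.e. the
   reflexive-transitive closure of that digraph. *)
Definition delta (n : nat) (le : rel 'I_n) (Jp : {set 'I_n}) : rel 'I_n :=
  connect (hasse_flip le Jp).

From HB Require Import structures.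
From mathcomp Require Import all_boot all_order all_algebra.
From mathcomp Require Import zify.
Set Implicit Arguments. Unset Strict Implicit. Unset Printing Implicit Defensive.
Import Order.TTheory GRing.Theory Num.Theory.

(* Write A = Jp \ {p}.  In the inward case every a in A lies below the
   unique maximal element p, so it has an upper cover, which must be one of
   its neighbours on the Hasse path on Jp; since p is an end of that path,
   the path read from p goes down one cover at a time.  So Jp is a chain with
   top p, and A meets the rest of J only through p: a in A lies below x
   outside A iff p does, and nothing outside A lies below a.  In delta J Jp
   the chain A is reversed and sits above p, with the dual description.  If s
   is the order-reversing involution of A, the matrix B whose j-th column is
   e_p - e_(s j) for j in A and e_j otherwise is an involution, and
   C_J = B^T C_delta B follows entry by entry.  The outward case is the
   inward case for the converse order, transposed; the corank statement holds
   because B also makes the Gram matrices congruent over any real field. *)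

Definition converse (T : Type) (e : rel T) : rel T := fun x y => e y x.

Section ConnectTransfer.
Variable T : finType.
Implicit Types (S : {set T}) (e : rel T) (x y : T).

Lemma connect_converse e x y : connect (converse e) x y = connect e y x.
Proof. exact: connect_rev. Qed.

Lemma connect_exit S e x y : connect e x y -> x \in S -> y \notin S ->
  exists u v, [/\ u \in S, v \notin S, e u v, connect e x u & connect e v y].
Proof.
case/connectP=> s + ->{y}; elim: s x => [|z s IH] x /=; first by move=> _ ->.
case/andP=> exz zs xS zsS; have [zS|zS] := boolP (z \in S).
  have [u [v [uS vS euv zu vy]]] := IH z zs zS zsS.
  by exists u, v; split=> //; apply: connect_trans (connect1 exz) zu.
by exists x, z; split=> //; apply/connectP; exists s.
Qed.

Lemma connect_closed S e x y : (forall u v, u \in S -> e u v -> v \in S) ->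
  x \in S -> connect e x y -> y \in S.
Proof.
move=> clS xS xy; apply/negPn/negP => yS.
have [u [v [uS vS euv _ _]]] := connect_exit xy xS yS.
by rewrite (clS _ _ uS euv) in vS.
Qed.

Lemma connect_transfer S e e' x y :
    (forall u v, u \in S -> e u v -> v \in S) ->
    {in S &, forall u v, e u v -> e' u v} ->
  x \in S -> connect e x y -> connect e' x y.
Proof.
move=> clS ee' + /connectP[s + ->{y}]; elim: s x => [|z s IH] x /= xS.
  by rewrite connect0.
case/andP=> exz zs; have zS := clS _ _ xS exz.
exact: connect_trans (connect1 (ee' _ _ xS zS exz)) (IH _ zS zs).
Qed.

Lemma connect_transfer_rev S e e' x y :
    (forall u v, v \in S -> e u v -> u \in S) ->
    {in S &, forall u v, e u v -> e' u v} ->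
  y \in S -> connect e x y -> connect e' x y.
Proof.
move=> clS ee' yS; rewrite -connect_converse -[connect e' _ _]connect_converse.
apply: connect_transfer yS => [u v uS /(clS _ _ uS) //|u v uS vS].
exact: ee'.
Qed.

End ConnectTransfer.

Section HasseDiagram.
Variables (n : nat) (J : rel 'I_n).
Hypothesis HJ : is_poset J.

Lemma hasse_le x y : hasse J x y -> J x y.
Proof. by case/and3P. Qed.

Lemma hasse_asym x y : hasse J x y -> ~~ hasse J y x.
Proof.
case: HJ => _ anti _ /and3P[xy Jxy _]; apply/negP=> /hasse_le Jyx.
by rewrite (anti x y) ?Jxy ?eqxx in xy.
Qed.

Lemma connect_hasse x y : connect (hasse J) x y = J x y.
Proof.
case: HJ => refl anti tr; apply/idP/idP.
  case/connectP=> s + ->{y}; elim: s x => [|z s IH] x /=; first by rewrite refl.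
  by case/andP=> /hasse_le Jxz /IH; apply: tr.
suff: forall N x y, #|[set z | J x z && J z y]| <= N -> J x y ->
  connect (hasse J) x y by apply.
elim=> [|N IH] {}x {}y cardN Jxy.
  by move: cardN; rewrite leqn0 => /eqP/cards0_eq/setP/(_ x); rewrite !inE refl Jxy.
have [->|xy] := eqVneq x y; first exact: connect0.
have [hxy|] := boolP (hasse J x y); first exact: connect1.
rewrite /hasse xy Jxy => /forallPn[k]; rewrite negbK => /and4P[kx ky Jxk Jky].
have shrink u v : J x u -> J v y -> (u != x) || (v != y) ->
    #|[set z | J u z && J z v]| < #|[set z | J x z && J z y]|.
  move=> Jxu Jvy uv; apply: proper_card; apply/properP; split.
    apply/subsetP=> z; rewrite !inE => /andP[Juz Jzv].
    by rewrite (tr _ _ _ Jxu Juz) (tr _ _ _ Jzv Jvy).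
  case/orP: uv => [ux|vy]; [exists x|exists y]; rewrite !inE ?refl ?Jxy //=.
    by apply: contra ux => /andP[Jux _]; rewrite (anti u x) ?Jux ?Jxu.
  by apply: contra vy => /andP[_ Jyv]; rewrite (anti v y) ?Jyv ?Jvy.
apply: (connect_trans (y := k)); apply: IH; rewrite // -ltnS.
  by apply: leq_trans cardN; apply: shrink; rewrite ?refl ?ky ?orbT.
by apply: leq_trans cardN; apply: shrink; rewrite ?refl ?kx.
Qed.

Lemma exists_cover x y : J x y -> x != y -> exists c, hasse J x c.
Proof.
rewrite -connect_hasse => /connectP[[|c s] /= + ->]; first by rewrite eqxx.
by case/andP=> xc _ _; exists c.
Qed.

Lemma maximal_in_above (A : {set 'I_n}) a : a \in A ->
  exists2 m, maximal_in J A m & J a m.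
Proof.
case: HJ => refl anti tr aA; pose up := [pred y | (y \in A) && J a y].
have up_a : up a by rewrite /= aA refl.
have [m /andP[mA Jam] mmax] := arg_maxnP (fun y => #|[set z | J z y]|) up_a.
exists m => //; split=> // y yA Jmy.
have sub : [set z | J z m] \subset [set z | J z y].
  by apply/subsetP=> z; rewrite !inE => /tr; apply.
have /eqP down_eq : [set z | J z m] == [set z | J z y].
  by rewrite eqEcard sub; apply: mmax; rewrite /= yA (tr _ _ _ Jam Jmy).
have : y \in [set z | J z y] by rewrite inE refl.
by rewrite -down_eq inE => Jym; apply: anti; rewrite Jym Jmy.
Qed.

End HasseDiagram.

Lemma is_poset_converse n (J : rel 'I_n) : is_poset J -> is_poset (converse J).
Proof.
case=> refl anti tr; split=> // [x y|y x z]; first by rewrite andbC; apply: anti.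
by move=> Jxy Jzx; apply: tr Jzx Jxy.
Qed.

Lemma hasse_converse n (J : rel 'I_n) x y : hasse (converse J) x y = hasse J y x.
Proof.
rewrite /hasse /converse eq_sym; congr [&& _, _ & _]; apply: eq_forallb => k.
by rewrite andbCA [J y k && _]andbC.
Qed.

Lemma hadj_converse n (J : rel 'I_n) : hadj (converse J) =2 hadj J.
Proof.
by move=> x y; rewrite /hadj (hasse_converse J x y) (hasse_converse J y x) orbC.
Qed.

Lemma anchored_path_converse n (J : rel 'I_n) p Jp :
  anchored_path J p Jp -> anchored_path (converse J) p Jp.
Proof.
have del : hadj_del (converse J) p =2 hadj_del J p.
  by move=> x y; rewrite /hadj_del hadj_converse.
case=> pJ [x [y [xp yp xy]]] [a aA Aeq] [s [us sJ hs]] deg; split=> //.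
- by exists x, y; rewrite (eq_connect del).
- by exists a; rewrite // Aeq; apply/setP=> z; rewrite !inE (eq_connect del).
- by exists s; split=> // u v uJ vJ; rewrite hadj_converse hs.
- by rewrite -deg; apply: eq_card => z; rewrite !inE hadj_converse.
Qed.

Section Consecutive.
Variable T : eqType.
Implicit Type s : seq T.

Lemma mem_zip_behead_nth s x0 i j : uniq s -> i < size s -> j < size s ->
  ((nth x0 s i, nth x0 s j) \in zip s (behead s)) = (j == i.+1).
Proof.
move=> us iS jS; apply/(nthP (x0, x0))/eqP => [[k]|ji]; rewrite size_zip size_behead.
  move=> kS; rewrite nth_zip_cond size_zip size_behead kS nth_behead.
  by case=> /eqP + /eqP; rewrite !nth_uniq //; lia.
exists i; first lia.
by rewrite nth_zip_cond size_zip size_behead ifT ?nth_behead ?ji //; lia.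
Qed.

Lemma consec_nth s x0 i j : uniq s -> i < size s -> j < size s ->
  consec s (nth x0 s i) (nth x0 s j) = (j == i.+1) || (i == j.+1).
Proof. by move=> us iS jS; rewrite /consec !mem_zip_behead_nth. Qed.

Lemma consec_rev s x y : uniq s -> x \in s -> y \in s ->
  consec (rev s) x y = consec s x y.
Proof.
move=> us xs ys; have rus : uniq (rev s) by rewrite rev_uniq.
have rev_nth k : k < size s -> nth x s k = nth x (rev s) (size s - k.+1).
  by move=> kS; rewrite nth_rev ?size_rev; [congr nth; lia | lia].
suff: forall i j, i < size s -> j < size s ->
    consec (rev s) (nth x s i) (nth x s j) = consec s (nth x s i) (nth x s j).
  by move=> /(_ (index x s) (index y s)); rewrite !nth_index ?index_mem //; apply.
move=> i j iS jS; rewrite [in RHS]consec_nth // (rev_nth _ iS) (rev_nth _ jS).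
by rewrite consec_nth ?size_rev //; lia.
Qed.

End Consecutive.

Lemma path_oriented_to_head (T : Type) (e : rel T) (w : nat -> T) (K : nat) :
    (forall x y, e x y -> ~~ e y x) ->
    (forall i j, i < K -> j < K -> e (w i) (w j) -> (j == i.+1) || (i == j.+1)) ->
    (forall i, 0 < i < K -> exists2 j, j < K & e (w i) (w j)) ->
  forall i, i.+1 < K -> e (w i.+1) (w i).
Proof.
(* Descending induction from the far end: the out-edge of w (i+1) can only
   go back to w i, because w (i+2) already points to w (i+1). *)
move=> asym adj out; suff: forall d i, i + d.+2 = K -> e (w i.+1) (w i).
  by move=> oriented i iK; apply: (oriented (K - i.+2)); lia.
elim=> [|d IH] i iK; have [j jK e_ij] : exists2 j, j < K & e (w i.+1) (w j).
- by apply: out; lia.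
- have iK' : i.+1 < K by lia.
  have /orP[/eqP|/eqP[/esym ji]] := adj _ _ iK' jK e_ij; first lia.
  by rewrite ji in e_ij.
- by apply: out; lia.
have iK' : i.+1 < K by lia.
have /orP[/eqP j2|/eqP[/esym ji]] := adj _ _ iK' jK e_ij.
  by move: e_ij; rewrite j2 => /asym; rewrite IH //; lia.
by rewrite ji in e_ij.
Qed.

Section SortedReversal.
Variables (T : eqType) (le : rel T).
Hypotheses (le_refl : reflexive le) (le_anti : antisymmetric le)
  (le_trans : transitive le).

Lemma sorted_nth_leE (t : seq T) x0 i j : uniq t -> sorted le t ->
  i < size t -> j < size t -> le (nth x0 t i) (nth x0 t j) = (i <= j).
Proof.
move=> ut st iS jS; have mono := sorted_leq_nth le_trans le_refl x0 st.
apply/idP/idP => [le_ij|]; last exact: mono.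
rewrite leqNgt; apply/negP => ji; have le_ji := mono _ _ jS iS (ltnW ji).
have /eqP := le_anti (introT andP (conj le_ij le_ji)).
by rewrite nth_uniq // => /eqP ij; lia.
Qed.

Lemma sorted_rev_involution (t : seq T) : uniq t -> sorted le t ->
  exists s : T -> T, [/\ {in t, forall a, s a \in t}, {in t, involutive s} &
    {in t &, forall a b, le a b = le (s b) (s a)}].
Proof.
move=> ut st; pose s a := nth a t ((size t).-1 - index a t).
have idx_lt a : a \in t -> index a t < size t by rewrite index_mem.
have s_in a : a \in t -> s a \in t by move=> /idx_lt ?; apply: mem_nth; lia.
have index_s a : a \in t -> index (s a) t = (size t).-1 - index a t.
  by move=> /idx_lt ?; rewrite index_uniq //; lia.
exists s; split=> // [a ta|a b ta tb].
  rewrite /s (index_s _ ta).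
  have -> : (size t).-1 - ((size t).-1 - index a t) = index a t.
    by have := idx_lt _ ta; lia.
  exact: nth_index.
rewrite -[a in LHS](nth_index a ta) -[b in LHS](nth_index a tb).
rewrite -[s b](nth_index a (s_in _ tb)) -[s a](nth_index a (s_in _ ta)).
rewrite !sorted_nth_leE ?idx_lt ?s_in // !index_s //.
by have := idx_lt _ ta; have := idx_lt _ tb; lia.
Qed.

End SortedReversal.

Section InwardAnchoredPath.
Variables (n : nat) (J : rel 'I_n) (p : 'I_n) (Jp : {set 'I_n}).
Hypotheses (HJ : is_poset J) (HJp : inward_anchored_path J p Jp).

Local Notation A := (Jp :\ p).
Local Notation H := (hasse J).
Local Notation F := (hasse_flip J Jp).
Local Notation D := (delta J Jp).

Lemma anchor_mem : p \in Jp.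
Proof. by case: HJp => -[]. Qed.

Lemma anchored_mem a : a \in A -> a \in Jp.
Proof. by case/setD1P. Qed.

Lemma anchor_of_notin v : v \in Jp -> v \notin A -> v = p.
Proof. by rewrite !inE => ->; rewrite andbT negbK => /eqP. Qed.

Lemma hadj_anchored_closed a y : a \in A -> hadj J a y -> y \in Jp.
Proof.
case: HJp => -[_ _ [x _ Aeq] _ _] _ aA ay; have [->|yp] := eqVneq y p.
  exact: anchor_mem.
suff: y \in A by case/setD1P.
move: aA; rewrite Aeq !inE yp => /andP[ap xa]; apply: connect_trans xa (connect1 _).
by rewrite /hadj_del ay ap yp.
Qed.

Lemma le_anchor a : a \in Jp -> J a p.
Proof.
case: HJp => _ [_ maxp] /(maximal_in_above HJ)[m /maxp -> //].
Qed.

Lemma anchor_notle a : a \in A -> ~~ J p a.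
Proof.
case: HJ => _ anti _ aA; apply/negP => Jpa; case/setD1P: aA => ap aJ.
by rewrite (anti a p) ?eqxx ?Jpa ?le_anchor in ap.
Qed.

Lemma hasse_flip_closed a v : a \in A -> F a v -> v \in A.
Proof.
move=> aA; rewrite /hasse_flip anchored_mem //=.
case: ifP => [vJ /hasse_le Jva|vJ Hav].
  by rewrite !inE vJ andbT; apply: contraNneq (anchor_notle aA) => <-.
by move: vJ; rewrite (hadj_anchored_closed aA) // /hadj Hav.
Qed.

Lemma hasse_anchored_closed u a : a \in A -> H u a -> u \in A.
Proof.
move=> aA Hua; have uJ : u \in Jp.
  by apply: hadj_anchored_closed aA _; rewrite /hadj Hua orbT.
apply: contraT => uA; move: (anchor_notle aA).
by rewrite -(anchor_of_notin uJ uA) (hasse_le Hua).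
Qed.

Lemma hasse_flip_out u v : u \notin A -> v \notin A -> F u v = H u v.
Proof.
move=> uA vA; rewrite /hasse_flip; case: ifP => // /andP[uJ vJ].
by rewrite (anchor_of_notin uJ uA) (anchor_of_notin vJ vA).
Qed.

Lemma le_out_anchored x a : x \notin A -> a \in A -> J x a = false.
Proof.
move=> xA aA; apply: negbTE; rewrite -(connect_hasse HJ).
apply: contraL aA => xa; rewrite -in_setC.
apply: (connect_closed _ _ xa); rewrite ?in_setC // => u v; rewrite !in_setC.
by move=> uA Huv; apply: contra uA => vA; apply: hasse_anchored_closed Huv.
Qed.

Lemma le_anchored_out a x : a \in A -> x \notin A -> J a x = J p x.
Proof.
case: (HJ) => _ _ tr aA xA; apply/idP/idP; last exact/tr/le_anchor/anchored_mem.
rewrite -!(connect_hasse HJ) => ax.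
have [u [v [uA vA Huv _ vx]]] := connect_exit ax aA xA.
have vJ : v \in Jp by apply: hadj_anchored_closed uA _; rewrite /hadj Huv.
by rewrite -(anchor_of_notin vJ vA).
Qed.

Lemma delta_out x y : x \notin A -> y \notin A -> D x y = J x y.
Proof.
move=> xA yA; rewrite -(connect_hasse HJ); apply/idP/idP.
  apply: (connect_transfer_rev (S := ~: A)); rewrite ?in_setC //.
    move=> u v; rewrite !in_setC => vA Fuv; apply: contra vA.
    by move/hasse_flip_closed; apply.
  by move=> u v; rewrite !in_setC => uA vA; rewrite hasse_flip_out.
apply: (connect_transfer (S := ~: A)); rewrite ?in_setC //.
  move=> u v; rewrite !in_setC => uA Huv; apply: contra uA.
  by move/hasse_anchored_closed; apply.
by move=> u v; rewrite !in_setC => uA vA; rewrite hasse_flip_out.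
Qed.

Lemma delta_anchored a b : a \in A -> b \in A -> D a b = J b a.
Proof.
have F_conv u v : u \in A -> v \in A -> F u v = H v u.
  by move=> /anchored_mem uJ /anchored_mem vJ; rewrite /hasse_flip uJ vJ.
move=> aA bA; rewrite -(connect_hasse HJ); apply/idP/idP => ab.
  rewrite -connect_converse.
  apply: (connect_transfer (S := A)) aA ab; first exact: hasse_flip_closed.
  by move=> u v uA vA; rewrite /converse -F_conv.
rewrite /delta -connect_converse.
apply: (connect_transfer_rev (S := A)) aA ab.
  by move=> u v vA /hasse_anchored_closed; apply.
by move=> u v uA vA; rewrite /converse F_conv.
Qed.

Lemma delta_anchor_anchored a : a \in A -> D p a.
Proof.
move=> aA; have := le_anchor (anchored_mem aA); rewrite -(connect_hasse HJ) => ap.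
have [u [v [uA vA Huv au _]]] := connect_exit ap aA (negbT (setD11 _ _)).
have vJ : v \in Jp by apply: hadj_anchored_closed uA _; rewrite /hadj Huv.
rewrite (anchor_of_notin vJ vA) in Huv.
have ua : D u a by rewrite delta_anchored // -(connect_hasse HJ).
apply: connect_trans ua; apply: connect1.
by rewrite /hasse_flip anchor_mem anchored_mem.
Qed.

Lemma delta_anchored_out a x : a \in A -> x \notin A -> D a x = false.
Proof.
move=> aA xA; apply: negbTE; apply: contra xA => ax.
exact: connect_closed hasse_flip_closed aA ax.
Qed.

Lemma delta_out_anchored x a : x \notin A -> a \in A -> D x a = D x p.
Proof.
move=> xA aA; apply/idP/idP => [xa|xp].
  have [||u [v]] := connect_exit (S := ~: A) xa; rewrite ?in_setC ?negbK //.
  case=> uA vA Fuv xu _.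
  have [uJ|uJ] := boolP (u \in Jp); first by rewrite -(anchor_of_notin uJ uA).
  move: Fuv; rewrite /hasse_flip (negbTE uJ) => /(hasse_anchored_closed vA).
  by move/anchored_mem; rewrite (negbTE uJ).
exact: connect_trans xp (delta_anchor_anchored aA).
Qed.

Lemma anchored_seq : exists t, [/\ uniq (p :: t), p :: t =i Jp &
  forall x y, x \in Jp -> y \in Jp -> hadj J x y = consec (p :: t) x y].
Proof.
case: HJp => -[_ _ _ [s [us sJ hs]] deg] _.
have ps : p \in s by rewrite sJ anchor_mem.
suff [s' [us' sJ' hs'] s'p] : exists2 s', [/\ uniq s', s' =i Jp &
    forall x y, x \in Jp -> y \in Jp -> hadj J x y = consec s' x y] & nth p s' 0 = p.
  case: s' us' sJ' hs' s'p => [_ /(_ p)|x t ? ? ? /= xp]; first by rewrite anchor_mem.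
  by exists t; rewrite -xp.
set q := index p s; have qS : q < size s by rewrite index_mem.
have p_nth : nth p s q = p by rewrite nth_index.
have nb k : k < size s -> (k == q.+1) || (q == k.+1) ->
    nth p s k \in [set y in Jp | hadj J p y].
  move=> kS kq; rewrite inE -sJ mem_nth //= hs -?sJ ?mem_nth //.
  by rewrite -{1}p_nth consec_nth.
have /orP[/eqP q0|/eqP qK] : (q == 0) || (q == (size s).-1).
  apply: contraT; rewrite negb_or => /andP[q0 qK].
  have [q1S q2S ne] : [/\ q.-1 < size s, q.+1 < size s & q.-1 != q.+1] by split; lia.
  have : #|[set nth p s q.-1; nth p s q.+1]| <= 1.
    by rewrite -deg; apply/subset_leq_card/subsetP => y /set2P[]->; apply: nb; lia.
  by rewrite cards2 nth_uniq ?ne.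
- by exists s; rewrite // -q0.
- exists (rev s); first split.
  + by rewrite rev_uniq.
  + by move=> x; rewrite mem_rev.
  + by move=> x y xJ yJ; rewrite hs // consec_rev ?sJ.
  by rewrite nth_rev ?subn1 -?qK // (leq_ltn_trans _ qS).
Qed.

Lemma anchored_seq_sorted t : uniq (p :: t) -> p :: t =i Jp ->
    (forall x y, x \in Jp -> y \in Jp -> hadj J x y = consec (p :: t) x y) ->
  sorted (converse J) (p :: t).
Proof.
move=> ut tJ ht; set s := p :: t.
have w_in i : i < size s -> nth p s i \in Jp by move=> iS; rewrite -tJ mem_nth.
suff oriented : forall i, i.+1 < size s -> H (nth p s i.+1) (nth p s i).
  by apply/(pathP p) => i iS; apply: hasse_le (oriented i iS).
apply: path_oriented_to_head => [x y|k j kS jS Hkj|k /andP[k0 kS]].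
- exact: hasse_asym.
- by rewrite -(@consec_nth _ s p) // -ht ?w_in // /hadj Hkj.
have kA : nth p s k \in A.
  by rewrite !inE w_in // andbT -{2}[p]/(nth p s 0) nth_uniq //; lia.
have [|c Hkc] := exists_cover HJ (le_anchor (w_in _ kS)); first by case/setD1P: kA.
have cJ : c \in Jp by apply: hadj_anchored_closed kA _; rewrite /hadj Hkc.
by exists (index c s); rewrite ?index_mem ?tJ ?nth_index ?tJ.
Qed.

Lemma anchored_chain_reversal : exists s : 'I_n -> 'I_n,
  [/\ {in A, forall a, s a \in A}, {in A, involutive s} &
      {in A &, forall a b, J a b = J (s b) (s a)}].
Proof.
have [t [ut tJ ht]] := anchored_seq.
have st := anchored_seq_sorted ut tJ ht.
have tA : t =i A.
  move=> x; rewrite !inE -tJ inE; have [->|//] := eqVneq x p.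
  by case/andP: ut => /negbTE.
have [refl anti tr] := is_poset_converse HJ.
case/andP: ut => _ ut.
have [s [sA sK s_rev]] := sorted_rev_involution refl anti tr ut (path_sorted st).
exists s; split=> [a|a|a b]; rewrite -!tA; [exact: sA | exact: sK |].
by move=> ta tb; apply: s_rev.
Qed.

End InwardAnchoredPath.

Local Open Scope ring_scope.

Lemma Cmx_converse (R : nzRingType) n (J : rel 'I_n) :
  Cmx R (converse J) = (Cmx R J)^T.
Proof. by apply/matrixP=> i j; rewrite !mxE. Qed.

Lemma Cmx_delta_converse (R : nzRingType) n (J : rel 'I_n) Jp :
  Cmx R (delta (converse J) Jp) = (Cmx R (delta J Jp))^T.
Proof.
apply/matrixP=> i j; rewrite !mxE /delta -[connect _ j i]connect_converse.
congr (nat_of_bool _)%:R; apply: eq_connect => u v.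
by rewrite /converse /hasse_flip (hasse_converse J u v) (hasse_converse J v u) andbC.
Qed.

Section FlipMatrix.
Variables (R : comNzRingType) (n : nat) (A : {set 'I_n}) (p : 'I_n) (s : 'I_n -> 'I_n).

Definition flip_mx : 'M[R]_n :=
  \matrix_(i, j) if j \in A then (i == p)%:R - (i == s j)%:R else (i == j)%:R.

Lemma mulmx_flip_mx (M : 'M[R]_n) i j :
  (M *m flip_mx) i j = if j \in A then M i p - M i (s j) else M i j.
Proof.
have pick (k : 'I_n) : \sum_l M i l * (l == k)%:R = M i k.
  rewrite (bigD1 k) //= eqxx mulr1 big1 ?addr0 // => l /negbTE ->.
  by rewrite mulr0.
rewrite !mxE; under eq_bigr => l _ do rewrite mxE.
by case: (j \in A); rewrite -?pick // -sumrB; apply: eq_bigr => l _; rewrite mulrBr.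
Qed.

Lemma tr_flip_mx_mulmx (M : 'M[R]_n) i j :
  (flip_mx^T *m M) i j = if i \in A then M p j - M (s i) j else M i j.
Proof.
have -> : flip_mx^T *m M = (M^T *m flip_mx)^T by rewrite trmx_mul trmxK.
by rewrite mxE mulmx_flip_mx !mxE.
Qed.

Hypotheses (pA : p \notin A) (sA : {in A, forall a, s a \in A})
  (sK : {in A, involutive s}).

Lemma flip_mxK : flip_mx *m flip_mx = 1%:M.
Proof.
apply/matrixP=> i j; rewrite mulmx_flip_mx !mxE (negbTE pA).
have [jA|//] := boolP (j \in A).
by rewrite sA // sK // opprB addrC subrK.
Qed.

Variables (J D : rel 'I_n).
Hypotheses (J_refl : reflexive J)
  (D_out : forall x y, x \notin A -> y \notin A -> D x y = J x y)
  (J_out_A : forall x a, x \notin A -> a \in A -> J x a = false)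
  (D_out_A : forall x a, x \notin A -> a \in A -> D x a = D x p)
  (J_A_out : forall a x, a \in A -> x \notin A -> J a x = J p x)
  (D_A_out : forall a x, a \in A -> x \notin A -> D a x = false)
  (D_A : {in A &, forall a b, D a b = J b a})
  (J_s : {in A &, forall a b, J a b = J (s b) (s a)}).

Lemma Cmx_flip_congr : Cmx R J = flip_mx^T *m Cmx R D *m flip_mx.
Proof.
apply/matrixP=> i j; rewrite mulmx_flip_mx !tr_flip_mx_mulmx !mxE.
have [iA|iA] := boolP (i \in A); have [jA|jA] := boolP (j \in A).
- rewrite D_out_A ?sA // D_out // (J_refl p) D_A_out ?sA //.
  by rewrite D_A ?sA // -J_s // subr0 subKr.
- by rewrite J_A_out // D_out // D_A_out ?sA // subr0.
- by rewrite J_out_A // D_out_A ?sA // subrr.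
- by rewrite D_out.
Qed.

End FlipMatrix.

Definition flip_congruence n (J D : rel 'I_n) (A : {set 'I_n}) p s : Prop :=
  [/\ {in A, forall a, s a \in A}, {in A, involutive s} &
      forall R : comNzRingType,
        Cmx R J = (flip_mx R A p s)^T *m Cmx R D *m flip_mx R A p s].

Lemma inward_flip_congr n (J : rel 'I_n) p Jp :
    is_poset J -> inward_anchored_path J p Jp ->
  exists s, flip_congruence J (delta J Jp) (Jp :\ p) p s.
Proof.
move=> HJ HJp; have [s [sA sK Js]] := anchored_chain_reversal HJ HJp.
exists s; split=> // R; apply: Cmx_flip_congr => //.
- by rewrite setD11.
- by case: HJ.
- exact: delta_out.
- exact: le_out_anchored.
- exact: delta_out_anchored.
- exact: le_anchored_out.
- exact: delta_anchored_out.
- exact: delta_anchored.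
Qed.

Lemma anchored_flip_congr n (J : rel 'I_n) p Jp : is_poset J ->
    inward_anchored_path J p Jp \/ outward_anchored_path J p Jp ->
  exists s, flip_congruence J (delta J Jp) (Jp :\ p) p s.
Proof.
move=> HJ [|[path_p min_p]]; first exact: inward_flip_congr.
have inward_conv : inward_anchored_path (converse J) p Jp.
  by split; first exact: anchored_path_converse.
have [s [sA sK congr]] := inward_flip_congr (is_poset_converse HJ) inward_conv.
exists s; split=> // R; apply: trmx_inj.
by rewrite -Cmx_converse congr Cmx_delta_converse !trmx_mul trmxK mulmxA.
Qed.

Lemma det_involutive_mx (R : idomainType) n (M : 'M[R]_n) :
  M *m M = 1%:M -> \det M = 1 \/ \det M = -1.
Proof.
move=> MM; have /eqP : \det M ^+ 2 = 1 by rewrite expr2 -det_mulmx MM det1.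
by rewrite sqrf_eq1 => /orP[] /eqP; [left|right].
Qed.

Section CorankCongruence.
Variable R : realFieldType.

Lemma Gmx_congr n (J D : rel 'I_n) (P : 'M[R]_n) :
  Cmx R J = P^T *m Cmx R D *m P -> Gmx R J = P^T *m Gmx R D *m P.
Proof.
move=> CJ; rewrite /Gmx CJ -scalemxAr -scalemxAl; congr (_ *: _).
by rewrite mulmxDr mulmxDl !trmx_mul trmxK !mulmxA.
Qed.

Lemma psd_congr n (G P : 'M[R]_n) : psd G -> psd (P^T *m G *m P).
Proof. by move=> psdG v; have := psdG (P *m v); rewrite trmx_mul !mulmxA. Qed.

Lemma mxrank_congr_le n (G P : 'M[R]_n) : (\rank (P^T *m G *m P) <= \rank G)%N.
Proof. exact: leq_trans (mxrankM_maxl _ _) (mxrankM_maxr _ _). Qed.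

Lemma nonneg_corank_congr n (J D : rel 'I_n) (P : 'M[R]_n) r :
    P \in unitmx -> Cmx R J = P^T *m Cmx R D *m P ->
  nonneg_corank R J r <-> nonneg_corank R D r.
Proof.
move=> Pu CJ; have GJ := Gmx_congr CJ.
have GD : Gmx R D = (invmx P)^T *m Gmx R J *m invmx P.
  by rewrite GJ !mulmxA -trmx_mul mulmxV // trmx1 mul1mx -mulmxA mulmxV ?mulmx1.
have rank_eq : \rank (Gmx R J) = \rank (Gmx R D).
  apply/eqP; rewrite eqn_leq; apply/andP; split.
    by rewrite {1}GJ mxrank_congr_le.
  by rewrite {1}GD mxrank_congr_le.
rewrite /nonneg_corank rank_eq; split=> -[psdG ->]; split=> //.
  by rewrite GD; apply: psd_congr.
by rewrite GJ; apply: psd_congr.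
Qed.

End CorankCongruence.

Theorem lemma3p3 (n : nat) (J : rel 'I_n) (p : 'I_n) (Jp : {set 'I_n}) :
  is_poset J ->
  inward_anchored_path J p Jp \/ outward_anchored_path J p Jp ->
  (exists B : 'M[int]_n,
      (\det B = 1 \/ \det B = -1) /\
      Cmx int J = B^T *m Cmx int (delta J Jp) *m B) /\
  (forall (R : realFieldType) (r : nat),
      nonneg_corank R J r <-> nonneg_corank R (delta J Jp) r).
Proof.
move=> HJ HJp; have [s [sA sK congr]] := anchored_flip_congr HJ HJp.
have flipK R := flip_mxK R (negbT (setD11 p Jp)) sA sK.
split.
  exists (flip_mx int (Jp :\ p) p s); split; last exact: congr.
  exact/det_involutive_mx/flipK.
move=> R r; apply: nonneg_corank_congr (congr R).
by case: (mulmx1_unit (flipK R)).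
Qed.
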